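(* Let $G=(V,E)$ be a directed unweighted graph with diameter $D=3h+z$, where $h\ge1$ and $z\in\{0,1,2\}$, and let $s\in[1,n]$. If $\hat D$ is the output of Approx-Diam$(G)$, then $2h+z\le\hat D\le 3h+z$.
   Context: $d(u,v)$ is the shortest-path distance from $u$ to $v$. $N_s^{\mathrm{out}}(v)$ (resp. $N_s^{\mathrm{in}}(v)$) is the set of the $s$ vertices $u$ with smallest $d(v,u)$ (resp. $d(u,v)$), ties broken by smaller id; $d_s^{\mathrm{out}}(v)=\max_{u\in N_s^{\mathrm{out}}(v)}d(v,u)$, $d_s^{\mathrm{in}}(v)=\max_{u\in N_s^{\mathrm{in}}(v)}d(u,v)$. $B^{\mathrm{out}}(v,r)=\{u: d(v,u)\le r\}$, $B^{\mathrm{in}}(v,r)=\{u:d(u,v)\le r\}$. The Aingworth et al. estimate AGG$_s(G)$ is the maximum of $d^{\mathrm{out}}(w)$, $\max_{u\in N_s^{\mathrm{out}}(w)}d^{\mathrm{in}}(u)$ and $\max_{u\in S}d^{\mathrm{out}}(u)$, where $w$ maximizes $d_s^{\mathrm{out}}$, $S$ is a set meeting every $N_s^{\mathrm{out}}(v)$, $d^{\mathrm{out}}(v)=\max_u d(v,u)$, $d^{\mathrm{in}}(v)=\max_u d(u,v)$. Approx-Diam$(G)$: set $\hat D=\max(\mathrm{AGG}_s(G),\mathrm{AGG}_s(G^R))$, where $G^R$ is $G$ with edges reversed; then for every ordered pair of distinct vertices $(u,v)$ such that $B^{\mathrm{out}}(u,d_s^{\mathrm{out}}(u)-1)\cap B^{\mathrm{in}}(v,d_s^{\mathrm{in}}(v)-1)=\emptyset$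 and there is no edge $(u',v')\in E$ with $u'\in B^{\mathrm{out}}(u,d_s^{\mathrm{out}}(u)-1)$, $v'\in B^{\mathrm{in}}(v,d_s^{\mathrm{in}}(v)-1)$, set $\hat D\gets\max(\hat D,d_s^{\mathrm{out}}(u)+d_s^{\mathrm{in}}(v))$; output $\hat D$. *)

From mathcomp Require Import all_boot.
Set Implicit Arguments. Unset Strict Implicit. Unset Printing Implicit Defensive.

Section ApproxDiam.
Variable n : nat.
Implicit Types (e : rel 'I_n) (u v x w : 'I_n) (s k : nat).

Fixpoint reach e k u : {set 'I_n} :=
  if k is k'.+1 then reach e k' u :|: [set y | [exists x in reach e k' u, e x y]]
  else [set u].

(* shortest-path distance d(u,v): least k with v reachable within k steps
   (a shortest path has < n edges); equals n if v is unreachable from u,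
   which never happens under the strong-connectivity hypothesis below. *)
Definition dist e u v : nat := find (fun k => v \in reach e k u) (iota 0 n).

Definition strongly_connected e := forall u v, connect e u v.

Definition diam e : nat := \max_(u : 'I_n) \max_(v : 'I_n) dist e u v.

Definition ecc_out e v : nat := \max_(u : 'I_n) dist e v u.
Definition ecc_in e v : nat := \max_(u : 'I_n) dist e u v.

Definition Nout e s v : seq 'I_n :=
  take s (sort (fun a b => (dist e v a < dist e v b) ||
                           ((dist e v a == dist e v b) && (a <= b)))
               (enum 'I_n)).
Definition Nin e s v : seq 'I_n :=
  take s (sort (fun a b => (dist e a v < dist e b v) ||
                           ((dist e a v == dist e b v) && (a <= b)))
               (enum 'I_n)).

Definition ds_out e s v : nat := \max_(u <- Nout e s v) dist e v u.
Definition ds_in e s v : nat := \max_(u <- Nin e s v) dist e u v.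

(* Aingworth et al. estimate, for a choice of w and S *)
Definition AGG_choice_ok e s w (S : {set 'I_n}) : Prop :=
  (forall x, ds_out e s x <= ds_out e s w) /\
  (forall x, has (fun y => y \in S) (Nout e s x)).

Definition AGG e s w (S : {set 'I_n}) : nat :=
  maxn (ecc_out e w)
       (maxn (\max_(u <- Nout e s w) ecc_in e u) (\max_(u in S) ecc_out e u)).

Definition revg e : rel 'I_n := fun x y => e y x.

(* B^out(u, d_s^out(u) - 1) and B^in(v, d_s^in(v) - 1), with integer radius
   (so the ball is empty when the radius is -1) *)
Definition Bout_s e s u : {set 'I_n} := [set x | dist e u x < ds_out e s u].
Definition Bin_s e s v : {set 'I_n} := [set x | dist e x v < ds_in e s v].

Definition pair_ok e s u v : bool :=
  [&& u != v, [disjoint Bout_s e s u & Bin_s e s v] &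
      ~~ [exists u', exists v',
            [&& u' \in Bout_s e s u, v' \in Bin_s e s v & e u' v']]].

Definition pair_term e s : nat :=
  \max_(u : 'I_n) \max_(v : 'I_n | pair_ok e s u v) (ds_out e s u + ds_in e s v).

(* output of Approx-Diam(G) for the choices (w,S) in G and (wR,SR) in G^R *)
Definition approx_diam e s w S wR SR : nat :=
  maxn (maxn (AGG e s w S) (AGG (revg e) s wR SR)) (pair_term e s).

End ApproxDiam.

(* Upper bound: every candidate value is at most D.  Each eccentricity is at
   most D (also in G^R, whose diameter equals D), and for a pair (u,v) accepted
   by the test the
   two open balls are disjoint and not joined by an edge, so a shortest u-v path
   must leave the first ball and enter the second one: d_s^out(u) + d_s^in(v)
   <= d(u,v) <= D.

   Lower bound: fix a, b with d(a,b) = D and suppose M < 2h + z.  The hitting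
   set S gives D <= M + d_s^out(a), and the vertex w of largest radius gives
   D + d_s^out(w) <= 2M + 1 (walk from w towards b until just before leaving
   N_s^out(w)); symmetrically in G^R for b.  These inequalities force the pair
   (a,b) to pass the test of the algorithm with d_s^out(a) + d_s^in(b) > M,
   contradicting the definition of M. *)

From mathcomp Require Import all_boot.
From mathcomp Require Import zify.
From Stdlib Require Import FunctionalExtensionality.
Set Implicit Arguments. Unset Strict Implicit. Unset Printing Implicit Defensive.

Lemma sorted_take_drop (T : eqType) (r : rel T) (L : seq T) k x y :
  transitive r -> sorted r L -> x \in take k L -> y \in drop k L -> r x y.
Proof.
move=> tr; rewrite sorted_pairwise // -{1}(cat_take_drop k L) pairwise_cat.
by case/and3P => /allrelP H _ _; apply: H.
Qed.

Definition walk (n : nat) (e : rel 'I_n) k (u v : 'I_n) :=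
  exists p : seq 'I_n, [/\ size p <= k, path e u p & last u p = v].

Section Walks.
Variables (n : nat) (e : rel 'I_n).

Lemma reachP k u v : v \in reach e k u <-> walk e k u v.
Proof.
elim: k v => [|k IH] v /=.
  rewrite inE; split; first by move/eqP->; exists [::].
  by case=> [[|x p]] [] //= _ _ ->.
rewrite inE in_set; split.
  case/orP=> [/IH [p [Hs Hp Hl]]|/existsP [x /andP [/IH [p [Hs Hp Hl]] Hx]]].
    by exists p; split=> //; apply: leqW.
  by exists (rcons p v); rewrite size_rcons rcons_path last_rcons Hp Hl Hx.
case=> p [Hs Hp Hl]; case/lastP: p Hs Hp Hl => [|p y] Hs Hp Hl.
  by apply/orP; left; apply/IH; exists [::].
rewrite size_rcons rcons_path last_rcons in Hs Hp Hl; subst y.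
case/andP: Hp => Hp He; apply/orP; right; apply/existsP; exists (last u p).
by rewrite He andbT; apply/IH; exists p.
Qed.

Lemma walk_cat k l u x v : walk e k u x -> walk e l x v -> walk e (k + l) u v.
Proof.
move=> [p [Hs Hp Hl]] [q [Hs' Hq Hl']]; exists (p ++ q).
by rewrite size_cat leq_add // cat_path last_cat Hp Hl Hq.
Qed.

Lemma walk_split j k u v :
  j <= k -> walk e k u v -> exists t, walk e j u t /\ walk e (k - j) t v.
Proof.
move=> Hjk [p [Hs Hp Hl]]; move: Hp; rewrite -(cat_take_drop j p) cat_path.
case/andP=> Hp1 Hp2; exists (last u (take j p)); split.
  by exists (take j p); rewrite size_take_min geq_minl.
by exists (drop j p); rewrite size_drop leq_sub2r // -last_cat cat_take_drop.
Qed.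

Lemma walk_rev k u v : walk e k u v -> walk (revg e) k v u.
Proof.
case=> p [Hs Hp Hl]; exists (rev (belast u p)); split.
- by rewrite size_rev size_belast.
- by rewrite -Hl rev_path.
- by case/lastP: p {Hs Hp} Hl => [|p y] //= _; rewrite belast_rcons rev_cons last_rcons.
Qed.

Lemma dist_le k u v : walk e k u v -> k < n -> dist e u v <= k.
Proof.
move=> Hw Hk; rewrite leqNgt; apply/negP => Hlt.
have := before_find 0 Hlt; rewrite nth_iota // add0n.
by move/negbT/negP; apply; apply/reachP.
Qed.

Lemma dist_refl u : dist e u u = 0.
Proof.
by apply/eqP; rewrite -leqn0; apply: (@dist_le 0); [exists [::]|apply: leq_ltn_trans (ltn_ord u)].
Qed.

End Walks.

Section StronglyConnected.
Variables (n : nat) (e : rel 'I_n).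
Hypothesis sc : strongly_connected e.

(* Removing cycles from a connecting walk leaves at most n - 1 edges. *)
Lemma walk_short u v : walk e n.-1 u v.
Proof.
case/connectP: (sc u v) => p Hp ->; case: (shortenP Hp) => p' Hp' Hu _.
exists p'; split=> //; have := max_card (mem (u :: p')).
by rewrite card_ord (card_uniqP Hu) /=; lia.
Qed.

Lemma dist_lt u v : dist e u v < n.
Proof.
rewrite /dist -[X in _ < X](size_iota 0 n) -has_find; apply/hasP; exists n.-1.
  by rewrite mem_iota add0n; have := ltn_ord u; lia.
by apply/reachP; apply: walk_short.
Qed.

Lemma dist_walk u v : walk e (dist e u v) u v.
Proof.
have Hh : has (fun k => v \in reach e k u) (iota 0 n).
  by rewrite has_find size_iota dist_lt.
by have := nth_find 0 Hh; rewrite nth_iota ?dist_lt // add0n => /reachP.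
Qed.

Lemma dist_tri u x v : dist e u v <= dist e u x + dist e x v.
Proof.
case: (ltnP (dist e u x + dist e x v) n) => H; last exact: leq_trans (ltnW (dist_lt u v)) H.
by apply: dist_le => //; apply: walk_cat (dist_walk u x) (dist_walk x v).
Qed.

Lemma dist_edge u v : e u v -> dist e u v <= 1.
Proof.
move=> He; case: (ltnP 1 n) => H; last exact: leq_trans (ltnW (dist_lt u v)) H.
by apply: dist_le => //; exists [:: v]; rewrite /= He.
Qed.

Lemma dist_split j u v :
  j <= dist e u v -> exists t, dist e u t = j /\ dist e t v = dist e u v - j.
Proof.
move=> Hj; have [t [H1 H2]] := walk_split Hj (dist_walk u v).
have Hn := dist_lt u v; have := dist_tri u t v.
have := dist_le H1 (leq_ltn_trans Hj Hn).
have := dist_le H2 (leq_ltn_trans (leq_subr _ _) Hn).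
by exists t; split; lia.
Qed.

Lemma dist_step t v :
  0 < dist e t v -> exists x, e t x /\ dist e x v < dist e t v.
Proof.
move=> Hpos; case: (dist_walk t v) => [[|x p] [Hs Hp Hl]].
  by move: Hpos; rewrite -Hl dist_refl.
case/andP: Hp => Hx Hp; exists x; split=> //.
rewrite -(prednK Hpos) ltnS; apply: dist_le; first by exists p; split=> //; move: Hs => /=; lia.
exact: leq_ltn_trans (leq_pred _) (dist_lt t v).
Qed.

(* For a radius r > 0, some vertex t of the open ball of radius r around u
   is at distance at most d(u,v) + 1 - r from v: either v itself, or the
   vertex at distance r - 1 on a shortest u-v path. *)
Lemma ball_exit r u v :
  0 < r -> exists t, dist e u t < r /\ dist e t v <= (dist e u v).+1 - r.
Proof.
move=> Hr; case: (ltnP (dist e u v) r) => Hd.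
  by exists v; rewrite dist_refl; split; lia.
have [t [Ht1 Ht2]] := dist_split (leq_trans (leq_pred r) Hd).
by exists t; split; lia.
Qed.

End StronglyConnected.

Section Reversal.
Variables (n : nat) (e : rel 'I_n).
Hypothesis sc : strongly_connected e.

Lemma sc_rev : strongly_connected (revg e).
Proof.
by move=> u v; case: (walk_rev (walk_short sc v u)) => p [_ Hp Hl]; apply/connectP; exists p.
Qed.

Lemma dist_rev u v : dist (revg e) u v = dist e v u.
Proof.
apply/eqP; rewrite eqn_leq; apply/andP; split.
  exact: dist_le (walk_rev (dist_walk sc v u)) (dist_lt sc v u).
exact: dist_le (walk_rev (dist_walk sc_rev u v)) (dist_lt sc_rev u v).
Qed.

Lemma diam_rev : diam (revg e) = diam e.
Proof.
by rewrite /diam exchange_big; apply: eq_bigr => u _; apply: eq_bigr => v _; rewrite dist_rev.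
Qed.

Lemma Nout_rev s v : Nout (revg e) s v = Nin e s v.
Proof.
rewrite /Nout /Nin; congr (take s (sort _ _)).
by do 2!apply: functional_extensionality => ?; rewrite !dist_rev.
Qed.

Lemma ds_out_rev s v : ds_out (revg e) s v = ds_in e s v.
Proof. by rewrite /ds_out Nout_rev; apply: eq_bigr => u _; rewrite dist_rev. Qed.

End Reversal.

Section Neighbourhoods.
Variables (n : nat) (e : rel 'I_n).

Lemma dist_ecc_out u v : dist e u v <= ecc_out e u.
Proof. exact: (@leq_bigmax _ (fun v => dist e u v) v). Qed.

Lemma dist_ecc_in u v : dist e u v <= ecc_in e v.
Proof. exact: (@leq_bigmax _ (fun u => dist e u v) u). Qed.

Lemma ecc_out_diam v : ecc_out e v <= diam e.
Proof. exact: (@leq_bigmax _ (fun u => ecc_out e u) v). Qed.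

Lemma ecc_in_diam v : ecc_in e v <= diam e.
Proof. by apply/bigmax_leqP => u _; apply: leq_trans (dist_ecc_out u v) (ecc_out_diam u). Qed.

Lemma ds_out_ecc s v : ds_out e s v <= ecc_out e v.
Proof. by apply/bigmax_leqP_seq => u _ _; apply: dist_ecc_out. Qed.

Lemma ds_in_ecc s v : ds_in e s v <= ecc_in e v.
Proof. by apply/bigmax_leqP_seq => u _ _; apply: dist_ecc_in. Qed.

Lemma dist_Nout s x y : y \in Nout e s x -> dist e x y <= ds_out e s x.
Proof. by move=> Hy; apply: (@leq_bigmax_seq _ _ xpredT (dist e x)). Qed.

(* N_s^out(x) contains the whole open ball of radius d_s^out(x) around x:
   a vertex outside the s nearest ones is at least as far as all of them. *)
Lemma Nout_ball s x y : dist e x y < ds_out e s x -> y \in Nout e s x.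
Proof.
set nearer := fun a b : 'I_n => (dist e x a < dist e x b) ||
                                ((dist e x a == dist e x b) && (a <= b)).
have tr : transitive nearer by move=> b a c; rewrite /nearer; lia.
set L := sort nearer (enum 'I_n).
have sortedL : sorted nearer L by apply: sort_sorted => a b; rewrite /nearer; lia.
move=> Hlt; apply/negPn/negP => Hy.
have HyL : y \in drop s L.
  have : y \in L by rewrite mem_sort mem_enum.
  by rewrite -{1}(cat_take_drop s L) mem_cat => /orP [Hin|//]; case/negP: Hy.
suff : ds_out e s x <= dist e x y by rewrite leqNgt Hlt.
apply/bigmax_leqP_seq => z Hz _.
by have := sorted_take_drop tr sortedL Hz HyL; rewrite /nearer; lia.
Qed.

End Neighbourhoods.

Lemma AGG_le_diam (n : nat) (g : rel 'I_n) s w (S : {set 'I_n}) :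
  AGG g s w S <= diam g.
Proof.
rewrite /AGG !geq_max ecc_out_diam /=; apply/andP; split.
  by apply/bigmax_leqP_seq => u _ _; apply: ecc_in_diam.
by apply/bigmax_leqP => u _; apply: ecc_out_diam.
Qed.

Section PairTest.
Variables (n : nat) (e : rel 'I_n) (s : nat).
Hypothesis sc : strongly_connected e.

(* Soundness of the pair test: if the two open balls around u and v are
   disjoint and not joined by an edge, a shortest u-v path leaves the first
   ball before it can enter the second, so the two radii fit along it. *)
Lemma pair_ok_dist u v :
  pair_ok e s u v -> 0 < ds_out e s u -> 0 < ds_in e s v ->
  ds_out e s u + ds_in e s v <= dist e u v.
Proof.
case/and3P=> _ Hdisj Hedge Hr1 Hr2; rewrite leqNgt; apply/negP => Hlt.
have [t [Htu Htv]] := ball_exit sc u v Hr1.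
have Ht : t \in Bout_s e s u by rewrite inE.
case: (ltnP (dist e t v) (ds_in e s v)) => Hq.
  have Htb : t \in Bin_s e s v by rewrite inE.
  by rewrite (disjointFr Hdisj Ht) in Htb.
have [x [Htx Hx]] := dist_step sc (leq_trans Hr2 Hq).
have Hxb : x \in Bin_s e s v by rewrite inE; lia.
by case/negP: Hedge; apply/existsP; exists t; apply/existsP; exists x; rewrite Ht Hxb Htx.
Qed.

Lemma pair_term_le_diam : pair_term e s <= diam e.
Proof.
apply/bigmax_leqP => u _; apply/bigmax_leqP => v Hp.
have := ds_out_ecc e s u; have := ds_in_ecc e s v; have := ecc_out_diam e u.
have := ecc_in_diam e v; have := dist_ecc_out e u v.
case: (posnP (ds_out e s u)) => Hr1; first lia.
case: (posnP (ds_in e s v)) => Hr2; first lia.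
by have := pair_ok_dist Hp Hr1 Hr2; lia.
Qed.

Lemma pair_ok_far a b :
  0 < ds_out e s a -> 0 < ds_in e s b ->
  ds_out e s a + ds_in e s b <= dist e a b -> pair_ok e s a b.
Proof.
move=> H1 H2 H3; apply/and3P; split.
- by apply/negP => /eqP Hab; move: H3; rewrite Hab dist_refl; lia.
- apply/pred0P => x /=; apply/negbTE/negP; rewrite !inE => /andP [Hx1 Hx2].
  by have := dist_tri sc a x b; lia.
- apply/negP => /existsP [u' /existsP [v' /and3P []]]; rewrite !inE => Hx1 Hx2 He.
  have := dist_tri sc a u' b; have := dist_tri sc u' v' b.
  by have := dist_edge sc He; lia.
Qed.

Lemma pair_term_ge a b :
  pair_ok e s a b -> ds_out e s a + ds_in e s b <= pair_term e s.
Proof.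
move=> Hp; rewrite /pair_term.
apply: leq_trans
  (@leq_bigmax_cond _ (pair_ok e s a) (fun v => ds_out e s a + ds_in e s v) b Hp) _.
exact: (@leq_bigmax _ (fun u => \max_(v | pair_ok e s u v) (ds_out e s u + ds_in e s v)) a).
Qed.

End PairTest.

Section AGGLowerBounds.
Variables (n : nat) (g : rel 'I_n) (s : nat) (w : 'I_n) (S : {set 'I_n}).
Hypothesis sc : strongly_connected g.
Hypothesis ok : AGG_choice_ok g s w S.

Lemma AGG_ecc_center : ecc_out g w <= AGG g s w S.
Proof. exact: leq_maxl. Qed.

Lemma AGG_ecc_Nout t : t \in Nout g s w -> ecc_in g t <= AGG g s w S.
Proof.
move=> Ht; apply: leq_trans (leq_maxr _ _); apply: leq_trans (leq_maxl _ _).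
exact: (@leq_bigmax_seq _ _ xpredT (ecc_in g) t Ht).
Qed.

Lemma AGG_ecc_hit y : y \in S -> ecc_out g y <= AGG g s w S.
Proof.
move=> Hy; apply: leq_trans (leq_maxr _ _); apply: leq_trans (leq_maxr _ _).
exact: (@leq_bigmax_cond _ (mem S) (ecc_out g) y Hy).
Qed.

(* S meets N_s^out(a), so a reaches a vertex of S within d_s^out(a). *)
Lemma AGG_hit_bound a b : dist g a b <= AGG g s w S + ds_out g s a.
Proof.
case: ok => _ /(_ a) /hasP [y Hy HyS].
have := dist_Nout Hy; have := AGG_ecc_hit HyS; have := dist_ecc_out g y b.
by have := dist_tri sc a y b; lia.
Qed.

(* Leave N_s^out(w) along a shortest w-b path: the last vertex t inside has
   d(a,t) <= AGG and d(t,b) <= AGG + 1 - d_s^out(w). *)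
Lemma AGG_center_bound a b : dist g a b + ds_out g s w <= 2 * AGG g s w S + 1.
Proof.
have := AGG_ecc_center; have := ds_out_ecc g s w.
case: (posnP (ds_out g s w)) => Hr.
  by have := AGG_hit_bound a b; case: ok => /(_ a) + _; lia.
have [t [Hwt Htb]] := ball_exit sc w b Hr.
have := AGG_ecc_Nout (Nout_ball Hwt); have := dist_ecc_in g a t.
by have := dist_tri sc a t b; have := dist_ecc_out g w b; lia.
Qed.

End AGGLowerBounds.

Lemma diam_attained (n : nat) (e : rel 'I_n) (w : 'I_n) :
  exists a b, dist e a b = diam e.
Proof.
have Hc : 0 < #|'I_n| by rewrite card_ord; apply: leq_ltn_trans (ltn_ord w).
case: (eq_bigmax (fun u => \max_(v : 'I_n) dist e u v) Hc) => a Ha.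
case: (eq_bigmax (fun v => dist e a v) Hc) => b Hb.
by exists a, b; rewrite /diam Ha Hb.
Qed.

Theorem lemma8 (n : nat) (e : rel 'I_n) (h z s : nat)
    (w wR : 'I_n) (S SR : {set 'I_n}) :
  strongly_connected e ->
  diam e = 3 * h + z ->
  1 <= h -> z <= 2 ->
  1 <= s <= n ->
  AGG_choice_ok e s w S ->
  AGG_choice_ok (revg e) s wR SR ->
  2 * h + z <= approx_diam e s w S wR SR <= 3 * h + z.
Proof.
move=> sc HD Hh Hz _ ok okR; have scR := sc_rev sc.
apply/andP; split; last first.
  have := AGG_le_diam e s w S; have := AGG_le_diam (revg e) s wR SR.
  by rewrite diam_rev //; have := pair_term_le_diam s sc; rewrite /approx_diam; lia.
(* Lower bound: were the output below 2h + z, the pair (a,b) realising the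
   diameter would pass the pair test with a value above the output. *)
rewrite leqNgt; apply/negP; rewrite /approx_diam => Hlow.
have [a [b Hab]] := diam_attained e w.
have Ha := AGG_hit_bound sc ok a b; have Hw := AGG_center_bound sc ok a b.
have Hb := AGG_hit_bound scR okR b a; have HwR := AGG_center_bound scR okR b a.
rewrite dist_rev // !ds_out_rev // in Hb HwR.
case: ok okR => [/(_ a) Hwa _] [/(_ b) HwRb _]; rewrite !ds_out_rev // in HwRb.
have Hpair : pair_ok e s a b by apply: (pair_ok_far sc); lia.
by have := pair_term_ge Hpair; lia.
Qed.
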